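(* Let $G=R_2$, let $\mathcal{X}$ be a linear vector field on $G$, and let $h:G\to G$, $h(t,x,y)=(\alpha_1t+\alpha_2x,\ \beta_1t+\beta_2x,\ 0)$ with $\alpha_1\beta_2-\alpha_2\beta_1=0$ and $\alpha_1\neq0$, so that $K=\ker h=\{(t,x,y)\in G:\alpha_1t=-\alpha_2x\}$ (i.e. $K=\{t=0\}$ if $\alpha_2=0$, and $K=\{t=-\frac{\alpha_2}{\alpha_1}x\}$ if $\alpha_2\neq0$). Then the pair $(\mathcal{X},\pi_K)$ is not locally observable.
   Context: $R_2$ is $\mathbb{R}^3$ with elements $(t,x,y)$ and product $(t,x,y)\cdot(s,z,w)=(t+s,\,x+z,\,y+e^tw)$; its identity is $(0,0,0)$. A linear vector field on $G$ is a vector field whose flow $(\varphi_s)_{s\in\mathbb{R}}$ is a one-parameter group of automorphisms of $G$. Every linear vector field $\mathcal{X}$ on $R_2$ has the form $\mathcal{X}(t,v)=(0,\mathcal{D}^*v+\Lambda_t\xi)$, $v=(x,y)^T$, with $\mathcal{D}^*\in\mathbb{R}^{2\times2}$, $\xi\in\mathbb{R}^2$, $\Lambda_t=\mathrm{diag}(t,e^t-1)$; its flow is $\varphi_s(t,v)=(t,\,e^{s\mathcal{D}^*}v+F_s\Lambda_t\xi)$ with $F_s=\sum_{j\ge1}\frac{s^j(\mathcal{D}^* )^{j-1}}{j!}$. For a closed subgroup $K$, $\pi_K:G\to G/K$ is the canonical projection. The pair $(\mathcal{X},\pi_K)$ is locally observable at $x_1$ if there is a neighborhood $U$ of $x_1$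 such that for every $x_2\in U\setminus\{x_1\}$ there is $t\ge0$ with $\pi_K(\varphi_t(x_1))\ne\pi_K(\varphi_t(x_2))$; it is locally observable if this holds at every $x_1\in G$. *)

From Stdlib Require Import Reals.
From Coquelicot Require Import Coquelicot.
Open Scope R_scope.

Definition G : Type := (R * R * R)%type.

Definition Gmul (g1 g2 : G) : G :=
  let '(t, x, y) := g1 in let '(s, z, w) := g2 in (t + s, x + z, y + exp t * w).

Definition Ge : G := (0, 0, 0).

Definition Ginv (g : G) : G :=
  let '(t, x, y) := g in (- t, - x, - (exp (- t) * y)).

Definition is_automorphism (f : G -> G) : Prop :=
  (forall a b, f (Gmul a b) = Gmul (f a) (f b)) /\
  (exists f' : G -> G, (forall a, f' (f a) = a) /\ (forall b, f (f' b) = b)).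

(** phi is the (complete) flow of the vector field X : G -> R^3
    (tangent vectors of R^3 identified with elements of R^3). *)
Definition is_flow (X : G -> G) (phi : R -> G -> G) : Prop :=
  (forall g, phi 0 g = g) /\
  (forall s r g, phi (s + r) g = phi s (phi r g)) /\
  (forall s g, is_derive (fun u => phi u g) s (X (phi s g))).

Definition linear_vector_field (X : G -> G) (phi : R -> G -> G) : Prop :=
  (forall g, continuous X g) /\ is_flow X phi /\
  (forall s, is_automorphism (phi s)).

Definition hmap (a1 a2 b1 b2 : R) (g : G) : G :=
  let '(t, x, _) := g in (a1 * t + a2 * x, b1 * t + b2 * x, 0).

Definition kerh (a1 a2 b1 b2 : R) : G -> Prop :=
  fun g => hmap a1 a2 b1 b2 g = Ge.

(** pi_K g1 = pi_K g2 in G/K (left cosets gK). *)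
Definition same_coset (K : G -> Prop) (g1 g2 : G) : Prop := K (Gmul (Ginv g1) g2).

Definition locally_observable_at (phi : R -> G -> G) (K : G -> Prop) (x1 : G) : Prop :=
  locally x1 (fun x2 => x2 <> x1 ->
    exists t : R, 0 <= t /\ ~ same_coset K (phi t x1) (phi t x2)).

Definition locally_observable (phi : R -> G -> G) (K : G -> Prop) : Prop :=
  forall x1 : G, locally_observable_at phi K x1.

(** The line [{(0,0,y)}] is the commutator subgroup of [R_2]: [(0,0,(e-1)w)] is
    the commutator of [(1,0,0)] and [(0,0,w)].  Hence every homomorphism of [R_2],
    in particular every flow map [phi t] of a linear vector field, maps it into
    itself.  Since [h] ignores the [y]-coordinate, the line lies in [K = ker h],
    so for every [t] the points [phi t e] and [phi t (0,0,y)] lie in the same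
    coset of [K]; as [(0,0,y)] can be taken arbitrarily close to [e], the pair is
    not even locally observable at [e]. *)
From Stdlib Require Import Reals Lra.
From Coquelicot Require Import Coquelicot.
Open Scope R_scope.

Lemma Gmul_commutator_yaxis (w : R) :
  Gmul (1, 0, 0) (0, 0, w) = Gmul (0, 0, (exp 1 - 1) * w) (Gmul (0, 0, w) (1, 0, 0)).
Proof. unfold Gmul; rewrite exp_0; f_equal; [f_equal|]; ring. Qed.

Lemma hom_yaxis (f : G -> G) (y : R) :
  (forall a b, f (Gmul a b) = Gmul (f a) (f b)) ->
  exists v, f (0, 0, y) = (0, 0, v).
Proof.
  intros Hf.
  assert (He : exp 1 - 1 <> 0) by (pose proof (exp_ineq1 1); lra).
  pose proof (f_equal f (Gmul_commutator_yaxis (y / (exp 1 - 1)))) as E.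
  replace ((exp 1 - 1) * (y / (exp 1 - 1))) with y in E by (field; exact He).
  rewrite !Hf in E.
  destruct (f (1, 0, 0)) as [[ta xa] ya], (f (0, 0, y / (exp 1 - 1))) as [[tw xw] yw],
    (f (0, 0, y)) as [[tz xz] yz].
  unfold Gmul in E; injection E as Et Ex _.
  exists yz; f_equal; f_equal; lra.
Qed.

Lemma same_coset_kerh_yaxis (a1 a2 b1 b2 u v : R) :
  same_coset (kerh a1 a2 b1 b2) (0, 0, u) (0, 0, v).
Proof. unfold same_coset, kerh, hmap, Ginv, Gmul, Ge; repeat f_equal; ring. Qed.

Lemma locally_origin_yaxis (P : G -> Prop) :
  locally Ge P -> exists y, y <> 0 /\ P (0, 0, y).
Proof.
  intros [eps Heps].
  pose proof (cond_pos eps) as Hpos.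
  exists (eps / 2); split; [lra|].
  apply Heps; split; [split; apply ball_center|].
  unfold ball; simpl; unfold AbsRing_ball, abs, minus, plus, opp; simpl.
  rewrite Rabs_pos_eq; lra.
Qed.

Theorem proposition3p2 (X : G -> G) (phi : R -> G -> G) (a1 a2 b1 b2 : R) :
  linear_vector_field X phi ->
  a1 * b2 - a2 * b1 = 0 ->
  a1 <> 0 ->
  ~ locally_observable phi (kerh a1 a2 b1 b2).
Proof.
  intros [_ [_ Haut]] _ _ Hobs.
  destruct (locally_origin_yaxis _ (Hobs Ge)) as [y [Hy Hsep]].
  destruct Hsep as [t [_ Hnot]].
  - intros E; injection E; exact Hy.
  - apply Hnot.
    destruct (Haut t) as [Hhom _]; unfold Ge.
    destruct (hom_yaxis _ 0 Hhom) as [u ->], (hom_yaxis _ y Hhom) as [v ->].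
    apply same_coset_kerh_yaxis.
Qed.
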